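(* Let $F=\sum_{\mathbf i\in I_F}a_{\mathbf i}\mathbf{x}^{\mathbf i}\in K[x_1,\dots,x_n]$ be irreducible and $\mathbf u\in(K^* )^n$. Then $F$ and $D_{\mathbf u}(F)$ are not coprime if and only if $\frac{a_{\mathbf i}\mathbf u^{\mathbf i}}{a_{\mathbf j}\mathbf u^{\mathbf j}}\in\mathbf{k}^*$ for all $\mathbf i,\mathbf j\in I_F$.
   Context: $\mathbf{k}$ is an algebraically closed field of characteristic zero, $K=\mathbf{k}(C)$ the function field of a smooth projective curve $C$ over $\mathbf{k}$. Fix $t\in K\setminus\mathbf{k}$; $\eta'=d\eta/dt$ is the derivation of $K$ extending $d/dt$ on $\mathbf{k}(t)$ (its kernel is $\mathbf{k}$). $I_F$ is the set of exponents $\mathbf i$ with $a_{\mathbf i}\ne0$, $\mathbf x^{\mathbf i}=x_1^{i_1}\cdots x_n^{i_n}$, $\mathbf u^{\mathbf i}=u_1^{i_1}\cdots u_n^{i_n}$, and $D_{\mathbf u}(F)=\sum_{\mathbf i\in I_F}\frac{(a_{\mathbf i}\mathbf{u}^{\mathbf i})'}{\mathbf{u}^{\mathbf i}}\mathbf{x}^{\mathbf i}$. ''Not coprime'' means having a common nonconstant factor in $K[x_1,\dots,x_n]$ (the zero polynomial is divisible by $F$). *)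

From HB Require Import structures.
From mathcomp Require Import all_boot all_order all_algebra.
From mathcomp Require Import mpoly.
Set Implicit Arguments. Unset Strict Implicit. Unset Printing Implicit Defensive.
Import GRing.Theory.
Local Open Scope ring_scope.

Definition is_derivation (K : fieldType) (d : K -> K) : Prop :=
  (forall x y : K, d (x + y) = d x + d y) /\
  (forall x y : K, d (x * y) = d x * y + x * d y).

Definition mon_eval (K : fieldType) (n : nat) (u : 'I_n -> K) (m : 'X_{1..n}) : K :=
  \prod_(i < n) u i ^+ m i.

Definition Du (K : fieldType) (d : K -> K) (n : nat) (u : 'I_n -> K)
    (F : {mpoly K[n]}) : {mpoly K[n]} :=
  \sum_(m <- msupp F) (d (F@_m * mon_eval u m) / mon_eval u m) *: 'X_[m].

(* constant polynomial (degree <= 0) *)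
Definition mconst (K : fieldType) (n : nat) (p : {mpoly K[n]}) : bool :=
  (msize p <= 1)%N.

Definition mdvd (K : fieldType) (n : nat) (G P : {mpoly K[n]}) : Prop :=
  exists Q : {mpoly K[n]}, P = Q * G.

(* irreducible: nonconstant (non-unit, nonzero) and every factorization has a
   constant (= unit, since the product is nonzero) factor *)
Definition mirreducible (K : fieldType) (n : nat) (F : {mpoly K[n]}) : Prop :=
  ~~ mconst F /\
  (forall G H : {mpoly K[n]}, F = G * H -> mconst G \/ mconst H).

Definition not_coprime (K : fieldType) (n : nat) (P Q : {mpoly K[n]}) : Prop :=
  exists G : {mpoly K[n]}, ~~ mconst G /\ mdvd G P /\ mdvd G Q.

From HB Require Import structures.
From mathcomp Require Import all_boot all_order all_algebra.
From mathcomp Require Import mpoly zify.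
Set Implicit Arguments. Unset Strict Implicit. Unset Printing Implicit Defensive.
Import GRing.Theory.
Local Open Scope ring_scope.

(* The m-th coefficient of D_u(F) is d(w_m)/u^m, so D_u(F) = l F holds exactly
   when every w_m has logarithmic derivative l (Du_eq_scale).  Since D_u(F)
   has size at most that of F, and a nonconstant common factor of F and
   D_u(F) must be associate to the irreducible F, non-coprimality forces
   F | D_u(F) (irreducible_common_factor_dvd), hence D_u(F) = l F
   (mdvd_msize_le_scale); conversely F is a common
   nonconstant factor of F and l F.  Finally, nonzero elements with the same
   logarithmic derivative have a quotient killed by d, i.e. a constant of k
   (derivation_quot_eq0), and multiplying by a constant preserves the
   logarithmic derivative (derivation_scale_const). *)

Section Derivation.
Variables (K : fieldType) (d : K -> K).
Hypothesis Hd : is_derivation d.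

Lemma derivation_quot_eq0 (l x y : K) :
  y != 0 -> d x = l * x -> d y = l * y -> d (x / y) = 0.
Proof.
move=> y0 dx dy; have leibniz : d x = d (x / y) * y + x / y * d y.
  by rewrite -Hd.2 divfK.
move: leibniz; rewrite dx dy mulrCA divfK // => leibniz.
have /eqP : d (x / y) * y = 0 by apply: (addIr (l * x)); rewrite add0r -leibniz.
by rewrite mulf_eq0 (negbTE y0) orbF => /eqP.
Qed.

Lemma derivation_scale_const (c w : K) : d c = 0 -> d (c * w) = c * d w.
Proof. by move=> dc; rewrite Hd.2 dc mul0r add0r. Qed.

End Derivation.

Lemma mcoeff_sum_scaleX (K : fieldType) n (r : seq 'X_{1..n})
    (f : 'X_{1..n} -> K) m : uniq r ->
  (\sum_(m' <- r) f m' *: ('X_[m'] : {mpoly K[n]}))@_m =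
  if m \in r then f m else 0.
Proof.
elim: r => [|x r IH]; first by rewrite big_nil mcoeff0.
rewrite /= => /andP [xr ur]; rewrite big_cons mcoeffD mcoeffZ mcoeffX IH // in_cons.
have [<-|nxm] /= := eqVneq x m; first by rewrite (negbTE xr) mulr1 addr0.
by rewrite mulr0 add0r; case: (m \in r) => //; rewrite eq_sym (negbTE nxm).
Qed.

Section OperatorDu.
Variables (K : fieldType) (d : K -> K) (n : nat) (u : 'I_n -> K).
Hypothesis Hu : forall i, u i != 0.

Lemma mon_eval_neq0 (m : 'X_{1..n}) : mon_eval u m != 0.
Proof. by apply/prodf_neq0 => i _; rewrite expf_neq0. Qed.

Lemma Du_coef (F : {mpoly K[n]}) m : (Du d u F)@_m =
  if m \in msupp F then d (F@_m * mon_eval u m) / mon_eval u m else 0.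
Proof. by rewrite /Du mcoeff_sum_scaleX // msupp_uniq. Qed.

Lemma msize_Du (F : {mpoly K[n]}) : (msize (Du d u F) <= msize F)%N.
Proof.
rewrite [msize (Du _ _ _)]msizeE; apply/bigmax_leqP_seq => m mD _.
apply: msize_mdeg_lt; move: mD; rewrite mcoeff_msupp Du_coef.
by case: ifP => //; rewrite eqxx.
Qed.

Lemma Du_eq_scale (F : {mpoly K[n]}) (l : K) :
  Du d u F = l *: F <->
  (forall m, m \in msupp F -> d (F@_m * mon_eval u m) = l * (F@_m * mon_eval u m)).
Proof.
have um m := mon_eval_neq0 m.
split=> [EDu m mF | logder].
  have := congr1 (mcoeff m) EDu; rewrite Du_coef mF mcoeffZ => Em.
  by rewrite mulrA -Em divfK.
apply/mpolyP => m; rewrite Du_coef mcoeffZ.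
case: ifP => [mF|/negbT mF]; last by rewrite (memN_msupp_eq0 mF) mulr0.
by rewrite logder // mulrA mulfK.
Qed.

End OperatorDu.

(* A nonconstant common factor of an irreducible F and P is associate to F,
   so F itself divides P. *)
Lemma irreducible_common_factor_dvd (K : fieldType) n (F P : {mpoly K[n]}) :
  mirreducible F -> not_coprime F P -> mdvd F P.
Proof.
move=> [Fnc irrF] [G [Gnc [[Q1 EF] [Q2 EP]]]].
have /msize1_polyC EQ1 : mconst Q1.
  by case: (irrF _ _ EF) => // Gc; rewrite Gc in Gnc.
set c := Q1@_0 in EQ1.
have c0 : c != 0.
  by apply: contraNneq Fnc => c0; rewrite EF EQ1 c0 mul0r /mconst msize0.
exists (Q2 * c^-1%:MP).
by rewrite EP -mulrA mul_mpolyC EF EQ1 mul_mpolyC scalerA mulVf ?scale1r.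
Qed.

Lemma mdvd_msize_le_scale (K : fieldType) n (F P : {mpoly K[n]}) :
  F != 0 -> mdvd F P -> (msize P <= msize F)%N -> exists l : K, P = l *: F.
Proof.
move=> F0 [Q ->] sizeQF.
have [->|Q0] := eqVneq Q 0; first by exists 0; rewrite mul0r scale0r.
have /msize1_polyC EQ : (msize Q <= 1)%N.
  have : (0 < msize F)%N by rewrite lt0n msize_poly_eq0.
  by move: sizeQF; rewrite msizeM //; move: (msize Q) (msize F) => q f; lia.
by exists Q@_0; rewrite {1}EQ mul_mpolyC.
Qed.

Theorem lemma3p3
  (k : closedFieldType) (Hchar : [pchar k] =i pred0)
  (K : fieldType) (iota : {rmorphism k -> K})
  (d : K -> K) (Hd : is_derivation d)
  (t : K) (Ht : d t = 1)
  (Hker : forall x : K, d x = 0 <-> exists c : k, x = iota c)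
  (n : nat) (F : {mpoly K[n]}) (HF : mirreducible F)
  (u : 'I_n -> K) (Hu : forall i, u i != 0) :
  not_coprime F (Du d u F) <->
  (forall i j : 'X_{1..n}, i \in msupp F -> j \in msupp F ->
     exists c : k, c != 0 /\
       (F@_i * mon_eval u i) / (F@_j * mon_eval u j) = iota c).
Proof.
have F0 : F != 0 by apply: contraNneq HF.1 => ->; rewrite /mconst msize0.
have w_neq0 m : m \in msupp F -> F@_m * mon_eval u m != 0.
  by move=> mF; rewrite mulf_neq0 ?mon_eval_neq0 // -mcoeff_msupp.
split=> [ncop i j iF jF | proportional].
- have [l /(Du_eq_scale _ Hu) logder] := mdvd_msize_le_scale F0
    (irreducible_common_factor_dvd HF ncop) (msize_Du d u F).
  have /Hker [c Ec] :=
    derivation_quot_eq0 Hd (w_neq0 _ jF) (logder _ iF) (logder _ jF).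
  exists c; split=> //.
  apply: contraTneq (mulf_neq0 (w_neq0 _ iF) (invr_neq0 (w_neq0 _ jF))) => c0.
  by rewrite Ec c0 rmorph0 eqxx.
- have [j jF] : exists j, j \in msupp F.
    have : msupp F != [::] by rewrite msupp_eq0.
    by case: (msupp F) => // j s _; exists j; rewrite mem_head.
  pose w := F@_j * mon_eval u j.
  exists F; split; first exact: HF.1.
  split; first by exists 1; rewrite mul1r.
  exists (d w / w)%:MP; rewrite mul_mpolyC; apply/(Du_eq_scale _ Hu) => m mF.
  have [c [_ Ec]] := proportional m j mF jF.
  have -> : F@_m * mon_eval u m = iota c * w by rewrite -Ec divfK ?w_neq0.
  rewrite (derivation_scale_const Hd); last by apply/Hker; exists c.
  by rewrite mulrCA divfK ?w_neq0.
Qed.
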